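(* In the setting of the multi-position greedy algorithm (positions $1,\dots,L$, pairwise disjoint ray sets $V_l$ with $|V_l|\ge K$, vectors $\mathbf p_j\in[0,1]^V$, $\boldsymbol\epsilon\in[0,1]^V$, $E=\sum_i\epsilon_i$, greedy iterates with final cost $f^{LK}=\sum_i b^{LK}_i$), let $$\mathrm{OPT}=\min\Big\{\sum_{i=1}^V\prod_{j\in J}p_{ij}\ :\ J\subseteq V_1\cup\dots\cup V_L,\ |J\cap V_l|\le K\ \forall l\Big\}>0,$$ let $R_1,\dots,R_{L-1}\ge 0$, and put $\overline{\mathrm{OPT}}_u=\mathrm{OPT}+\sum_{v=1}^u R_v$ for $u=0,\dots,L-1$. Assume that for every $t\in\{0,\dots,LK-1\}$ the set $A_t$ of rays available before iteration $t+1$ contains a nonempty subset $S$ with $|S|\le LK$ and $\sum_i\prod_{j\in S}p_{ij}\le\overline{\mathrm{OPT}}_{\lfloor t/K\rfloor}$. Let $0<\mathrm{LB}\le\mathrm{OPT}$. Then the approximation ratio $\rho=f^{LK}/\mathrm{OPT}$ satisfies $$\rho\le\frac{E}{\mathrm{LB}}\cdot\frac{1}{e}+\sum_{u=0}^{L-1}\gamma_u\Big(1+\frac{\sum_{v=1}^uR_v}{\mathrm{LB}}\Big),\qquad \gamma_u=\Big(1-e^{-1/L}\Big)\Big(e^{-1/L}\Big)^{L-1-u}.$$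
   Context: Multi-position greedy algorithm: $\mathbf b^0=\boldsymbol\epsilon$, $A_0=V_1\cup\dots\cup V_L$, $J_l=\emptyset$; at each iteration $t$ choose $j_t\in\arg\min_{j\in A_{t-1}}\sum_i b^{t-1}_ip_{ij}$ with position $l_t$, add $j_t$ to $J_{l_t}$, set $\mathbf b^t=\mathbf b^{t-1}\odot\mathbf p_{j_t}$ (coordinatewise product), and remove $j_t$ from the available set, removing all of $V_{l_t}$ instead if $|J_{l_t}|=K$. It runs $LK$ iterations. $R_v$ bounds the increase of the achievable optimum caused by closing the $v$-th position. $e$ is Euler's number. *)

From HB Require Import structures.
From mathcomp Require Import all_boot.
From Stdlib Require Import Reals.

Set Implicit Arguments.
Unset Strict Implicit.
Unset Printing Implicit Defensive.

Definition all_rays (T : finType) (L : nat) (Vs : 'I_L -> {set T}) : {set T} :=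
  \bigcup_(l < L) Vs l.

Definition feasible (T : finType) (L K : nat) (Vs : 'I_L -> {set T})
  (J : {set T}) : bool :=
  (J \subset all_rays Vs) && [forall l : 'I_L, #|J :&: Vs l| <= K].

Definition setcost (T : finType) (nV : nat) (p : T -> 'I_nV -> R)
  (J : {set T}) : R :=
  \big[Rplus/0%R]_(i < nV) \big[Rmult/1%R]_(j in J) p j i.

Definition avail (T : finType) (L K : nat) (Vs : 'I_L -> {set T})
  (s : seq T) : {set T} :=
  [set j in all_rays Vs | (j \notin s) &&
     [forall l : 'I_L, (j \in Vs l) ==> (count (fun x => x \in Vs l) s < K)]].

Definition bvec (T : finType) (nV : nat) (eps : 'I_nV -> R)
  (p : T -> 'I_nV -> R) (s : seq T) (i : 'I_nV) : R :=
  (eps i * \big[Rmult/1%R]_(j <- s) p j i)%R.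

Definition score (T : finType) (nV : nat) (eps : 'I_nV -> R)
  (p : T -> 'I_nV -> R) (s : seq T) (j : T) : R :=
  \big[Rplus/0%R]_(i < nV) (bvec eps p s i * p j i)%R.

Definition greedy_run (T : finType) (nV L K : nat) (Vs : 'I_L -> {set T})
  (eps : 'I_nV -> R) (p : T -> 'I_nV -> R) (js : seq T) : Prop :=
  size js = (L * K)%N /\
  forall (s1 : seq T) (j : T) (s2 : seq T), js = s1 ++ j :: s2 ->
    j \in avail K Vs s1 /\
    forall j', j' \in avail K Vs s1 -> (score eps p s1 j <= score eps p s1 j')%R.

Definition final_cost (T : finType) (nV : nat) (eps : 'I_nV -> R)
  (p : T -> 'I_nV -> R) (js : seq T) : R :=
  \big[Rplus/0%R]_(i < nV) bvec eps p js i.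

Definition OPTbar (OPT : R) (Rs : nat -> R) (u : nat) : R :=
  (OPT + \big[Rplus/0%R]_(1 <= v < u.+1) Rs v)%R.

Definition gamma (L u : nat) : R :=
  ((1 - exp (- (1 / INR L))) * pow (exp (- (1 / INR L))) (L - 1 - u))%R.

(** The residual cost [f_t] falls by at least a fraction [1/|S| >= 1/(LK)] of
    its excess over [OPTbar_(t/K)] at every greedy step: averaging the greedy
    score over the rays of the set [S] provided by the hypothesis and using the
    union bound [1 - prod x <= sum (1 - x)] gives
    [|S| f_(t+1) <= (|S| - 1) f_t + cost(S)].  Over the [K] steps of one
    position the factor [(1 - 1/(LK))^K] is at most [s = e^(-1/L)], so
    [f_((u+1)K) <= s f_(uK) + (1 - s) OPTbar_u].  Unrolling this recurrence over
    the [L] positions gives [f_(LK) <= E/e + sum_u gamma_u OPTbar_u], and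
    [LB <= OPT] turns this into the stated bound on [f_(LK) / OPT]. *)

From HB Require Import structures.
From mathcomp Require Import all_boot zify.
From Stdlib Require Import Reals Lra Lia.

Set Implicit Arguments.
Unset Strict Implicit.
Unset Printing Implicit Defensive.

HB.instance Definition _ := Monoid.isComLaw.Build R 0%R Rplus
  (fun a b c => esym (Rplus_assoc a b c)) Rplus_comm Rplus_0_l.
HB.instance Definition _ := Monoid.isComLaw.Build R 1%R Rmult
  (fun a b c => esym (Rmult_assoc a b c)) Rmult_comm Rmult_1_l.
HB.instance Definition _ := Monoid.isMulLaw.Build R 0%R Rmult Rmult_0_l Rmult_0_r.
HB.instance Definition _ :=
  Monoid.isAddLaw.Build R Rmult Rplus Rmult_plus_distr_r Rmult_plus_distr_l.

Section RealBigops.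
Local Open Scope R_scope.

Variable I : Type.
Implicit Types (r : seq I) (P : pred I) (F G : I -> R).

Lemma Rsum_le r P F G :
  (forall i, P i -> F i <= G i) ->
  \big[Rplus/0]_(i <- r | P i) F i <= \big[Rplus/0]_(i <- r | P i) G i.
Proof.
move=> FG; apply: (big_ind2 (fun x y => x <= y)) => //; first lra.
by move=> a b c d; lra.
Qed.

Lemma Rsum_ge0 r P F :
  (forall i, P i -> 0 <= F i) -> 0 <= \big[Rplus/0]_(i <- r | P i) F i.
Proof.
move=> F0; apply: (big_ind (fun x => 0 <= x)) => //; first lra.
by move=> a b; lra.
Qed.

Lemma Rprod_in01 r P F :
  (forall i, P i -> 0 <= F i <= 1) -> 0 <= \big[Rmult/1]_(i <- r | P i) F i <= 1.
Proof.
move=> F01; apply: (big_ind (fun x => 0 <= x <= 1)) => //; first lra.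
by move=> a b ha hb; nra.
Qed.

Lemma Rsum_add1_le_size_add_prod r F :
  (forall i, 0 <= F i <= 1) ->
  \big[Rplus/0]_(i <- r) F i + 1 <= INR (size r) + \big[Rmult/1]_(i <- r) F i.
Proof.
move=> F01; elim: r => [|a r IH]; first by rewrite !big_nil /=; lra.
rewrite !big_cons [size _]/= S_INR.
have := @Rprod_in01 r xpredT F (fun i _ => F01 i).
have := F01 a; nra.
Qed.

End RealBigops.

Section RealSetBigops.
Local Open Scope R_scope.

Variable A : finType.

Lemma Rsum_const_card (S : {set A}) (a : R) :
  \big[Rplus/0]_(j in S) a = INR #|S| * a.
Proof.
rewrite big_const; elim: #|S| => [|n IH]; first by rewrite /=; lra.
by rewrite iterS IH S_INR; lra.
Qed.

Lemma Rsum_add1_le_card_add_prod (S : {set A}) (F : A -> R) :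
  (forall j, 0 <= F j <= 1) ->
  \big[Rplus/0]_(j in S) F j + 1 <= INR #|S| + \big[Rmult/1]_(j in S) F j.
Proof. by move=> F01; rewrite -!big_enum cardE; exact: Rsum_add1_le_size_add_prod. Qed.

End RealSetBigops.

Section Contraction.
Local Open Scope R_scope.

Lemma le_mul_div_lower_bound (a OPT LB : R) :
  0 <= a -> 0 < LB -> LB <= OPT -> a <= OPT * (a / LB).
Proof.
move=> a0 LB0 LB_OPT.
have -> : OPT * (a / LB) = a + a * (OPT - LB) / LB by field; lra.
have : 0 <= a * (OPT - LB) / LB; last lra.
apply: Rmult_le_pos; first by apply: Rmult_le_pos; lra.
exact/Rlt_le/Rinv_0_lt_compat.
Qed.

Definition contracts_toward (q c x y : R) : Prop :=
  y <= x /\ (c <= x -> y - c <= q * (x - c)).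

Lemma averaging_contracts_toward (N n c x y : R) :
  1 <= n <= N -> n * y <= (n - 1) * x + c -> y <= x ->
  contracts_toward (1 - 1 / N) c x y.
Proof.
move=> [n1 nN] avg yx; split=> // cx.
have excess : y - c <= (1 - 1 / n) * (x - c).
  apply: (Rmult_le_reg_l n); first lra.
  have -> : n * ((1 - 1 / n) * (x - c)) = (n - 1) * (x - c) by field; lra.
  lra.
have invN : 1 / N <= 1 / n.
  by rewrite /Rdiv !Rmult_1_l; apply: Rinv_le_contravar; lra.
nra.
Qed.

Lemma contracts_toward_trans (q1 q2 c x y z : R) :
  0 <= q1 -> 0 <= q2 ->
  contracts_toward q1 c x y -> contracts_toward q2 c y z ->
  contracts_toward (q2 * q1) c x z.
Proof.
move=> q1_0 q2_0 [yx xy_c] [zy yz_c]; split; first lra.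
move=> cx; have := xy_c cx.
case: (Rle_lt_dec c y) => [cy | yc]; first by have := yz_c cy; nra.
move=> _; have : 0 <= q2 * q1 * (x - c) by apply: Rmult_le_pos; nra.
lra.
Qed.

Lemma contracts_toward_iter (q c : R) (x : nat -> R) (m k : nat) :
  0 <= q ->
  (forall i, (i < k)%nat -> contracts_toward q c (x (m + i)%nat) (x (m + i).+1)) ->
  contracts_toward (q ^ k) c (x m) (x (m + k)%nat).
Proof.
move=> q0; elim: k => [|k IH] steps.
  by rewrite addn0; split=> [|_] /=; lra.
rewrite addnS [q ^ _]/=.
apply: (contracts_toward_trans (pow_le q k q0) q0) (steps k (ltnSn k)).
by apply: IH => i ik; apply: steps; apply: ltnW.
Qed.

Lemma contracts_toward_convex (q s c x y : R) :
  contracts_toward q c x y -> q <= s -> s <= 1 -> y <= s * x + (1 - s) * c.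
Proof.
move=> [yx xy_c] qs s1.
by case: (Rle_lt_dec c x) => [cx | xc]; [have := xy_c cx; nra | nra].
Qed.

Lemma linear_recurrence_unroll (s : R) (y c : nat -> R) (n : nat) :
  0 <= s -> (forall u, (u < n)%nat -> y u.+1 <= s * y u + (1 - s) * c u) ->
  y n <= s ^ n * y 0%nat + \big[Rplus/0]_(w < n) ((1 - s) * s ^ (n - 1 - w) * c w).
Proof.
move=> s0; elim: n => [|n IH] rec; first by rewrite big_ord0 /=; lra.
have ylast := rec n (ltnSn n).
have := IH (fun u un => rec u (ltnW un)).
rewrite big_ord_recr /= subSS subn0 subnn /=.
have -> : \big[Rplus/0]_(w < n) ((1 - s) * s ^ (n - w) * c w) =
          s * \big[Rplus/0]_(w < n) ((1 - s) * s ^ (n - 1 - w) * c w).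
  rewrite big_distrr; apply: eq_bigr => w _ /=.
  have -> : (n - w = (n - 1 - w).+1)%nat by have := ltn_ord w; lia.
  by rewrite [s ^ _.+1]/=; ring.
set B := \big[Rplus/0]_(w < n) _.
move=> yn; have := Rmult_le_compat_l s _ _ s0 yn; lra.
Qed.

End Contraction.

Section ExpBounds.
Local Open Scope R_scope.

Lemma pow_exp (x : R) (n : nat) : exp x ^ n = exp (INR n * x).
Proof.
elim: n => [|n IH]; first by rewrite /= Rmult_0_l exp_0.
by rewrite S_INR /= IH -exp_plus; f_equal; lra.
Qed.

Variables L K : nat.
Hypotheses (L0 : (0 < L)%nat) (K0 : (0 < K)%nat).

Let L_pos : 0 < INR L. Proof. by apply: lt_0_INR; apply/ltP. Qed.
Let K_pos : 0 < INR K. Proof. by apply: lt_0_INR; apply/ltP. Qed.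

Lemma exp_neg_inv_in01 : 0 <= exp (- (1 / INR L)) <= 1.
Proof.
split; first exact/Rlt_le/exp_pos.
rewrite -[X in _ <= X]exp_0; apply/Rlt_le/exp_increasing; have : 0 < 1 / INR L; last lra.
by apply: Rdiv_lt_0_compat; lra.
Qed.

Lemma exp_neg_inv_pow : exp (- (1 / INR L)) ^ L = 1 / exp 1.
Proof.
rewrite pow_exp.
have -> : INR L * - (1 / INR L) = - 1 by field; lra.
by rewrite exp_Ropp /Rdiv Rmult_1_l.
Qed.

Lemma one_sub_inv_ge0 : 0 <= 1 - 1 / INR (L * K).
Proof.
have N1 : 1 <= INR (L * K) by apply: (le_INR 1); apply/leP; rewrite muln_gt0 L0.
have : 1 / INR (L * K) <= 1; last lra.
by rewrite /Rdiv Rmult_1_l -Rinv_1; apply: Rinv_le_contravar; lra.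
Qed.

Lemma one_sub_inv_pow_le_exp : (1 - 1 / INR (L * K)) ^ K <= exp (- (1 / INR L)).
Proof.
apply: (Rle_trans _ (exp (- (1 / INR (L * K))) ^ K)).
  apply: pow_incr; split; first exact: one_sub_inv_ge0.
  by have := exp_ineq1_le (- (1 / INR (L * K))); lra.
rewrite pow_exp mult_INR; right; f_equal; field; lra.
Qed.

End ExpBounds.

Section GreedyStep.
Local Open Scope R_scope.

Variables (T : finType) (nV : nat) (p : T -> 'I_nV -> R) (eps : 'I_nV -> R).
Hypotheses (p01 : forall j i, 0 <= p j i <= 1) (eps01 : forall i, 0 <= eps i <= 1).

Lemma bvec_in01 (s : seq T) (i : 'I_nV) : 0 <= bvec eps p s i <= 1.
Proof.
have := @Rprod_in01 T s xpredT (fun j => p j i) (fun j _ => p01 j i).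
by rewrite /bvec; have := eps01 i; nra.
Qed.

Lemma final_cost_rcons (s : seq T) (j : T) :
  final_cost eps p (rcons s j) = score eps p s j.
Proof.
apply: eq_bigr => i _.
by rewrite /bvec -cats1 big_cat big_seq1 Rmult_assoc.
Qed.

Lemma score_le_final_cost (s : seq T) (j : T) :
  score eps p s j <= final_cost eps p s.
Proof.
apply: Rsum_le => i _.
by have := bvec_in01 s i; have := p01 j i; nra.
Qed.

Lemma card_mul_min_score_le (S : {set T}) (s : seq T) (j : T) :
  (forall j', j' \in S -> score eps p s j <= score eps p s j') ->
  INR #|S| * score eps p s j <= (INR #|S| - 1) * final_cost eps p s + setcost p S.
Proof.
move=> jmin; rewrite -Rsum_const_card.
apply: (Rle_trans _ (\big[Rplus/0]_(j' in S) score eps p s j')).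
  exact: Rsum_le.
rewrite /score exchange_big /= /final_cost /setcost big_distrr -big_split /=.
apply: Rsum_le => i _; rewrite -big_distrr /=.
have union := @Rsum_add1_le_card_add_prod T S (fun j' => p j' i) (fun j' => p01 j' i).
have := @Rprod_in01 T (index_enum T) (fun j' => j' \in S) (fun j' => p j' i)
  (fun j' _ => p01 j' i).
by have := bvec_in01 s i; nra.
Qed.

End GreedyStep.

Lemma greedy_run_take_succ (T : finType) (nV L K : nat) (Vs : 'I_L -> {set T})
    (eps : 'I_nV -> R) (p : T -> 'I_nV -> R) (js : seq T) (t : nat) :
  greedy_run K Vs eps p js -> (t < L * K)%nat ->
  exists j, take t.+1 js = rcons (take t js) j /\
    forall j', j' \in avail K Vs (take t js) ->
      (score eps p (take t js) j <= score eps p (take t js) j')%R.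
Proof.
move=> [size_js greedy] tLK; have t_js : (t < size js)%nat by rewrite size_js.
case js_t: (drop t js) => [|j s2].
  by have := size_drop t js; rewrite js_t /=; lia.
have nth_t : nth j js t = j.
  by have := drop_nth j t_js; rewrite js_t => -[j_nth _]; rewrite -j_nth.
exists j; split; first by rewrite (take_nth j t_js) nth_t.
by apply: (greedy _ _ s2 _).2; rewrite -js_t cat_take_drop.
Qed.

Section GreedyRun.
Local Open Scope R_scope.

Variables (T : finType) (nV L K : nat) (Vs : 'I_L -> {set T}).
Variables (p : T -> 'I_nV -> R) (eps : 'I_nV -> R) (Rs : nat -> R).
Variables (OPT : R) (js : seq T).
Hypotheses (L0 : (0 < L)%nat) (K0 : (0 < K)%nat).
Hypotheses (p01 : forall j i, 0 <= p j i <= 1) (eps01 : forall i, 0 <= eps i <= 1).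
Hypothesis run : greedy_run K Vs eps p js.
Hypothesis good_subset : forall t, (t < L * K)%nat ->
  exists S : {set T}, S \subset avail K Vs (take t js) /\ S != set0 /\
    (#|S| <= L * K)%nat /\ setcost p S <= OPTbar OPT Rs (t %/ K).

Local Notation cost_after t := (final_cost eps p (take t js)).
Local Notation s := (exp (- (1 / INR L))).

Lemma greedy_step_contracts (t : nat) : (t < L * K)%nat ->
  contracts_toward (1 - 1 / INR (L * K)) (OPTbar OPT Rs (t %/ K))
    (cost_after t) (cost_after t.+1).
Proof.
move=> tLK; have [j [take_succ jmin]] := greedy_run_take_succ run tLK.
have [S [S_avail [S_ne [S_card S_cost]]]] := good_subset tLK.
rewrite take_succ final_cost_rcons.
have avg := card_mul_min_score_le p01 eps01 (fun j' j'S => jmin j' (subsetP S_avail j' j'S)).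
apply: (averaging_contracts_toward (n := INR #|S|)); last exact: score_le_final_cost.
  split; [apply: (le_INR 1) | apply: le_INR]; apply/leP; [by rewrite card_gt0 | exact: S_card].
lra.
Qed.

Lemma greedy_position_bound (u : nat) : (u < L)%nat ->
  cost_after (u.+1 * K) <= s * cost_after (u * K) + (1 - s) * OPTbar OPT Rs u.
Proof.
move=> uL; rewrite mulSnr.
apply: (contracts_toward_convex (q := (1 - 1 / INR (L * K)) ^ K)).
- apply: (contracts_toward_iter (x := fun t => cost_after t)) (one_sub_inv_ge0 L0 K0) _.
  move=> k kK; have tLK : (u * K + k < L * K)%nat.
    by apply: (@leq_trans (u.+1 * K)); [rewrite mulSnr ltn_add2l | rewrite leq_mul2r uL orbT].
  by have := greedy_step_contracts tLK; rewrite divnMDl // divn_small // addn0.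
- exact: one_sub_inv_pow_le_exp.
- exact: (exp_neg_inv_in01 L0).2.
Qed.

Lemma greedy_final_cost_le :
  final_cost eps p js <= 1 / exp 1 * \big[Rplus/0]_(i < nV) eps i +
    \big[Rplus/0]_(u < L) (gamma L u * OPTbar OPT Rs u).
Proof.
have := linear_recurrence_unroll (y := fun u => cost_after (u * K)) (c := OPTbar OPT Rs)
  (exp_neg_inv_in01 L0).1 greedy_position_bound.
rewrite take_oversize ?(proj1 run) // exp_neg_inv_pow //= take0.
suff -> : final_cost eps p [::] = \big[Rplus/0]_(i < nV) eps i by [].
by apply: eq_bigr => i _; rewrite /bvec big_nil Rmult_1_r.
Qed.

End GreedyRun.

Theorem theorem3 (T : finType) (nV L K : nat) (Vs : 'I_L -> {set T})
  (p : T -> 'I_nV -> R) (eps : 'I_nV -> R) (Rs : nat -> R)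
  (OPT LB : R) (js : seq T) :
  (0 < L)%N -> (0 < K)%N ->
  (forall l1 l2 : 'I_L, l1 != l2 -> [disjoint Vs l1 & Vs l2]) ->
  (forall l : 'I_L, K <= #|Vs l|)%N ->
  (forall j i, 0 <= p j i <= 1)%R ->
  (forall i, 0 <= eps i <= 1)%R ->
  (exists J : {set T}, feasible K Vs J /\ setcost p J = OPT) ->
  (forall J : {set T}, feasible K Vs J -> (OPT <= setcost p J)%R) ->
  (0 < OPT)%R ->
  (forall v, (1 <= v)%N -> (v <= L - 1)%N -> (0 <= Rs v)%R) ->
  greedy_run K Vs eps p js ->
  (forall t, (t < L * K)%N ->
     exists S : {set T}, S \subset avail K Vs (take t js) /\ S != set0 /\
       (#|S| <= L * K)%N /\ (setcost p S <= OPTbar OPT Rs (t %/ K))%R) ->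
  (0 < LB)%R -> (LB <= OPT)%R ->
  (final_cost eps p js / OPT <=
     (\big[Rplus/0%R]_(i < nV) eps i) / LB * (1 / exp 1) +
     \big[Rplus/0%R]_(u < L)
        (gamma L u * (1 + (\big[Rplus/0%R]_(1 <= v < u.+1) Rs v) / LB)))%R.
Proof.
Local Open Scope R_scope.
move=> L0 K0 _ _ p01 eps01 _ _ OPT0 Rs0 run good LB0 LB_OPT.
have cost_le := greedy_final_cost_le L0 K0 p01 eps01 run good.
apply: (Rmult_le_reg_l OPT) => //.
have -> : OPT * (final_cost eps p js / OPT) = final_cost eps p js by field; lra.
apply: (Rle_trans _ _ _ cost_le); rewrite Rmult_plus_distr_l.
apply: Rplus_le_compat.
  have E0 : 0 <= \big[Rplus/0]_(i < nV) eps i.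
    by apply: Rsum_ge0 => i _; have := eps01 i; lra.
  have e_inv0 : 0 < 1 / exp 1 by apply: Rdiv_lt_0_compat; [lra | apply: exp_pos].
  have := le_mul_div_lower_bound E0 LB0 LB_OPT; nra.
rewrite big_distrr /=; apply: Rsum_le => u _; rewrite /OPTbar.
have gamma0 : 0 <= gamma L u.
  have [s0 s1] := exp_neg_inv_in01 L0.
  by apply: Rmult_le_pos; [lra | apply: pow_le].
have R0 : 0 <= \big[Rplus/0]_(1 <= v < u.+1) Rs v.
  rewrite big_seq; apply: Rsum_ge0 => v; rewrite mem_index_iota => /andP [v1 vu].
  by apply: Rs0 => //; have := ltn_ord u; lia.
have := le_mul_div_lower_bound R0 LB0 LB_OPT; nra.
Qed.
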